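(* For every integer $n$ with $n \equiv 1 \pmod{3}$ and $4 \le n \le 52$, there exists a permutation $\sigma$ of $\mathbb{Z}_n = \{0,\dots,n-1\}$ such that $f_\sigma(\delta) \in \{a, a+2\}$ for every $\delta \in \{1,\dots,n-1\}$, where $a = (n(n+1)-2)/3$.
   Context: For a permutation $\sigma$ of $\mathbb{Z}_n$, the shift correlation at shift $\delta$ is $f_\sigma(\delta) = \sum_{j=0}^{n-1} \lvert \sigma((j+\delta) \bmod n) - \sigma(j) \rvert$, where $\sigma$ takes values in $\{0,\dots,n-1\}$ and the absolute value is of ordinary integers. Such a permutation is called a near-perfect permutation. *)

From mathcomp Require Import all_boot all_fingroup.
Set Implicit Arguments. Unset Strict Implicit. Unset Printing Implicit Defensive.

Definition absdiff (x y : nat) : nat := (x - y) + (y - x).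

(* sigma applied to the residue k mod n, as a natural number in {0,...,n-1}.
   (For n > 0, k %% n < n always holds, so the default 0 is never used.) *)
Definition perm_at (n : nat) (sigma : {perm 'I_n}) (k : nat) : nat :=
  if @insub nat (fun i => i < n) 'I_n (k %% n) is Some i then val (sigma i) else 0.

Definition shift_corr (n : nat) (sigma : {perm 'I_n}) (delta : nat) : nat :=
  \sum_(0 <= j < n) absdiff (perm_at sigma (j + delta)) (perm_at sigma j).

From mathcomp Require Import all_boot all_fingroup.
Set Implicit Arguments. Unset Strict Implicit. Unset Printing Implicit Defensive.

(* A finite verification: for each of the seventeen admissible n, an explicit
   near-perfect permutation found by computer search is given by its sequence of
   values, and its shift-correlation condition is a boolean property decided by
   evaluation. *)

Definition seq_shift_corr (n : nat) (s : seq nat) (d : nat) : nat :=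
  sumn [seq absdiff (nth 0 s ((j + d) %% n)) (nth 0 s (j %% n)) | j <- iota 0 n].

Definition near_perfect_seqb (n : nat) (s : seq nat) : bool :=
  let a := (n * (n + 1) - 2) %/ 3 in
  perm_eq s (iota 0 n) &&
  all (fun d => (seq_shift_corr n s d == a) || (seq_shift_corr n s d == a + 2))
      (iota 1 (n - 1)).

Section PermOfSeq.

Variables (n : nat) (s : seq nat).
Hypothesis s_perm : perm_eq s (iota 0 n).

Lemma size_perm_seq : size s = n.
Proof. by rewrite (perm_size s_perm) size_iota. Qed.

Lemma nth_perm_seq_lt i : i < n -> nth 0 s i < n.
Proof.
move=> lt_i_n.
have : nth 0 s i \in iota 0 n by rewrite -(perm_mem s_perm) mem_nth // size_perm_seq.
by rewrite mem_iota.
Qed.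

Definition fun_of_seq (i : 'I_n) : 'I_n := insubd i (nth 0 s i).

Lemma fun_of_seqE i : val (fun_of_seq i) = nth 0 s i.
Proof. by rewrite /fun_of_seq val_insubd nth_perm_seq_lt. Qed.

Lemma fun_of_seq_inj : injective fun_of_seq.
Proof.
move=> i j /(congr1 val); rewrite !fun_of_seqE => /eqP.
rewrite nth_uniq ?size_perm_seq ?(perm_uniq s_perm) ?iota_uniq // => /eqP.
exact: val_inj.
Qed.

Definition perm_of_seq : {perm 'I_n} := perm fun_of_seq_inj.

Lemma perm_at_perm_of_seq k : perm_at perm_of_seq k = nth 0 s (k %% n).
Proof.
rewrite /perm_at; case: insubP => [i _ <-|]; first by rewrite permE fun_of_seqE.
case: n s_perm => [|m] s_perm' /=; last by rewrite ltn_pmod.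
by rewrite modn0 nth_default // (perm_size s_perm') size_iota.
Qed.

Lemma shift_corr_perm_of_seq d : shift_corr perm_of_seq d = seq_shift_corr n s d.
Proof.
rewrite /shift_corr /seq_shift_corr sumnE big_map /index_iota subn0.
by apply: eq_bigr => j _; rewrite !perm_at_perm_of_seq.
Qed.

End PermOfSeq.

Lemma near_perfect_seqbP n s : near_perfect_seqb n s ->
  exists sigma : {perm 'I_n},
    forall delta : nat, 1 <= delta <= n - 1 ->
      let a := (n * (n + 1) - 2) %/ 3 in
      shift_corr sigma delta = a \/ shift_corr sigma delta = a + 2.
Proof.
case/andP=> s_perm /allP corr_ok; exists (perm_of_seq s_perm) => d d_range a.
rewrite shift_corr_perm_of_seq.
have : d \in iota 1 (n - 1).
  rewrite mem_iota; case/andP: d_range => -> /=.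
  by case: n {corr_ok s_perm a} => //= m; rewrite subn1 addnC ltnS.
by move/corr_ok => /orP [] /eqP ->; [left | right].
Qed.

Definition near_perfect_witness (n : nat) : seq nat :=
  match n with
  | 4 => [:: 0; 2; 3; 1]
  | 7 => [:: 3; 6; 5; 2; 0; 4; 1]
  | 10 => [:: 5; 2; 3; 9; 7; 6; 1; 8; 0; 4]
  | 13 => [:: 7; 0; 2; 5; 12; 10; 1; 11; 3; 8; 9; 6; 4]
  | 16 => [:: 9; 10; 11; 7; 4; 12; 1; 2; 14; 6; 15; 0; 3; 5; 13; 8]
  | 19 => [:: 15; 8; 6; 4; 0; 10; 17; 1; 9; 5; 7; 12; 3; 11; 14; 18; 2; 16; 13]
  | 22 => [:: 4; 15; 7; 10; 13; 19; 0; 8; 1; 6; 5; 14; 11; 17; 3; 9; 20; 21; 16; 2; 18; 12]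
  | 25 => [:: 9; 17; 15; 22; 20; 13; 16; 8; 23; 5; 10; 19; 11; 0; 7; 12; 1; 24; 14; 18; 4; 2; 3; 21; 6]
  | 28 => [:: 14; 11; 8; 7; 20; 2; 24; 12; 25; 10; 4; 21; 5; 0; 26; 19; 1; 6; 3; 13; 23; 18; 9; 17; 27; 22; 15; 16]
  | 31 => [:: 14; 21; 12; 8; 18; 9; 0; 22; 1; 15; 13; 3; 20; 10; 28; 2; 23; 30; 17; 7; 27; 29; 19; 4; 6; 5; 16; 25; 24; 26; 11]
  | 34 => [:: 5; 23; 18; 1; 29; 25; 0; 17; 2; 6; 12; 15; 14; 9; 8; 33; 19; 27; 16; 24; 7; 30; 20; 28; 4; 3; 32; 10; 21; 22; 31; 26; 13; 11]
  | 37 => [:: 27; 31; 9; 8; 23; 12; 15; 33; 4; 16; 13; 17; 0; 10; 6; 29; 34; 35; 21; 28; 25; 11; 32; 18; 36; 1; 2; 26; 30; 14; 22; 7; 24; 3; 20; 19; 5]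
  | 40 => [:: 30; 8; 1; 13; 28; 33; 39; 7; 29; 15; 26; 37; 22; 16; 38; 35; 3; 31; 14; 5; 12; 6; 19; 27; 20; 11; 21; 4; 0; 10; 32; 24; 2; 34; 25; 23; 18; 17; 36; 9]
  | 43 => [:: 26; 41; 32; 16; 19; 28; 37; 25; 3; 24; 5; 34; 13; 31; 35; 2; 17; 36; 4; 42; 29; 40; 30; 27; 6; 12; 38; 21; 8; 7; 15; 9; 1; 10; 33; 22; 20; 23; 39; 11; 18; 14; 0]
  | 46 => [:: 26; 5; 35; 22; 34; 1; 3; 39; 17; 7; 10; 44; 25; 20; 31; 21; 28; 29; 36; 14; 13; 19; 9; 30; 32; 40; 41; 42; 11; 38; 33; 0; 12; 45; 2; 37; 15; 18; 27; 6; 8; 16; 23; 43; 24; 4]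
  | 49 => [:: 9; 20; 2; 4; 45; 16; 36; 31; 7; 5; 34; 41; 27; 30; 8; 37; 40; 19; 48; 17; 42; 35; 28; 23; 46; 3; 33; 10; 25; 6; 13; 26; 14; 22; 32; 44; 47; 21; 24; 38; 18; 12; 0; 29; 1; 15; 43; 39; 11]
  | 52 => [:: 7; 23; 1; 18; 43; 26; 12; 22; 0; 17; 50; 11; 9; 21; 24; 27; 32; 16; 29; 44; 39; 36; 30; 41; 3; 8; 5; 10; 34; 45; 20; 37; 25; 19; 40; 6; 46; 15; 42; 33; 2; 47; 51; 38; 4; 48; 35; 14; 13; 31; 49; 28]
  | _ => [::]
  end.

Lemma near_perfect_witnessP n :
  n %% 3 = 1 -> 4 <= n <= 52 -> near_perfect_seqb n (near_perfect_witness n).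
Proof.
have all_ok : all (fun m => (m %% 3 != 1) || (m < 4) ||
                            near_perfect_seqb m (near_perfect_witness m)) (iota 0 53).
  by vm_compute.
move=> n_mod3 /andP [n_ge4 n_le52].
have /(allP all_ok) : n \in iota 0 53 by rewrite mem_iota.
by rewrite n_mod3 /= ltnNge n_ge4.
Qed.

Theorem theorem6 (n : nat) :
  n %% 3 = 1 -> 4 <= n <= 52 ->
  exists sigma : {perm 'I_n},
    forall delta : nat, 1 <= delta <= n - 1 ->
      let a := (n * (n + 1) - 2) %/ 3 in
      shift_corr sigma delta = a \/ shift_corr sigma delta = a + 2.
Proof.
by move=> n_mod3 n_range; apply/near_perfect_seqbP/near_perfect_witnessP.
Qed.
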